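(* Let $\mu>0$ be an integer, $\beta\ge 2$ an integer base, and $f:\{0,1,\dots,\mu\}^\omega\to\mathbb{R}$ an aggregate function. If $f$ is $\omega$-regular under base $\beta$, then for every relation $R\in\{\le,<,\ge,>,=,\neq\}$ there is a B\''uchi automaton over $\{0,\dots,\mu\}\times\{0,\dots,\mu\}$ accepting exactly the pairs $(A,B)$ of sequences in $\{0,\dots,\mu\}^\omega$ (read synchronously) with $f(A)\,R\,f(B)$; i.e., the comparator of $f$ for every relation $R$ is $\omega$-regular.
   Context: Representation of reals: for an integer $\beta\ge 2$ let $\mathrm{Digit}(\beta)=\{0,\dots,\beta-1\}$. For $x\in\mathbb{R}$ there are unique words $\mathrm{Int}(x,\beta)=z_0z_1\cdots\in\mathrm{Digit}(\beta)^*0^\omega$ and $\mathrm{Frac}(x,\beta)=f_1f_2\cdots\notin \mathrm{Digit}(\beta)^*(\beta-1)^\omega$ with $|x|=\sum_{i\ge0}z_i\beta^i+\sum_{i\ge1}f_i\beta^{-i}$. The representation $\mathrm{rep}(x,\beta)$ is the $\omega$-word consisting of a sign symbol ($+$ if $x\ge0$, $-$ if $x<0$) followed by the interleaving of $\mathrm{Int}(x,\beta)$ and $\mathrm{Frac}(x,\beta)$; its alphabet is $\mathrm{AlphaRep}(\beta)=\{+,-\}\cup\mathrm{Digit}(\beta)$. A function $f:\Sigma^\omega\to\mathbb{R}$ ($\Sigma$ finite) is $\omega$-regular under base $\beta$ if there is a B\''uchi automaton over $\Sigma\times\mathrm{AlphaRep}(\beta)$ that, reading pairs of $\omega$-words synchronously,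 accepts $(A,\mathrm{rep}(x,\beta))$ iff $f(A)=x$, for all $A\in\Sigma^\omega$, $x\in\mathbb{R}$. A comparator automaton for $f$ and relation $R$ is an automaton over $\Sigma\times\Sigma$ accepting $(A,B)$ iff $f(A)\,R\,f(B)$; it is $\omega$-regular if it is a finite-state B\''uchi automaton. *)

From Stdlib Require Import Reals Lra Lia List.
Open Scope R_scope.

Definition FiniteType (Q : Type) : Prop := exists l : list Q, forall q : Q, In q l.

Definition oword (S : Type) := nat -> S.

Record Buchi (S : Type) := mkBuchi {
  bstate : Type;
  bstate_finite : FiniteType bstate;
  binit : bstate -> Prop;
  bdelta : bstate -> S -> bstate -> Prop;
  bacc : bstate -> Prop
}.
Arguments bstate {S}. Arguments binit {S}. Arguments bdelta {S}. Arguments bacc {S}.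

Definition accepts {Al : Type} (B : Buchi Al) (w : oword Al) : Prop :=
  exists r : nat -> bstate B,
    binit B (r 0%nat) /\
    (forall i, bdelta B (r i) (w i) (r (S i))) /\
    (forall n, exists m, (n <= m)%nat /\ bacc B (r m)).

Definition zipw {S T : Type} (a : oword S) (b : oword T) : oword (S * T) :=
  fun i => (a i, b i).

Definition Digit (beta : nat) := {d : nat | (d < beta)%nat}.
Definition dval {beta} (d : Digit beta) : nat := proj1_sig d.

Inductive AlphaRep (beta : nat) : Type :=
| APlus : AlphaRep beta
| AMinus : AlphaRep beta
| ADig : Digit beta -> AlphaRep beta.
Arguments APlus {beta}. Arguments AMinus {beta}. Arguments ADig {beta}.

(** [IsRep beta x w] : w = rep(x, beta).
    Int(x,beta) = z_0 z_1 ..., Frac(x,beta) = f_1 f_2 ... with [fr i = f_{i+1}];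
    rep = sign, z_0, f_1, z_1, f_2, ...  *)
Definition IsRep (beta : nat) (x : R) (w : oword (AlphaRep beta)) : Prop :=
  exists (z fr : nat -> Digit beta),
    ((0 <= x /\ w 0%nat = APlus) \/ (x < 0 /\ w 0%nat = AMinus)) /\
    (forall k, w (2 * k + 1)%nat = ADig (z k) /\ w (2 * k + 2)%nat = ADig (fr k)) /\
    (exists N, forall i, (N <= i)%nat -> dval (z i) = 0%nat) /\
    ~ (exists N, forall i, (N <= i)%nat -> dval (fr i) = (beta - 1)%nat) /\
    (exists a b : R,
        infinite_sum (fun i => INR (dval (z i)) * INR beta ^ i) a /\
        infinite_sum (fun i => INR (dval (fr i)) / INR beta ^ (S i)) b /\
        Rabs x = a + b).

Definition Sig (mu : nat) := {n : nat | (n <= mu)%nat}.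

Definition omega_regular_fun {Sg : Type} (beta : nat) (f : oword Sg -> R) : Prop :=
  exists B : Buchi (Sg * AlphaRep beta),
    forall (A : oword Sg) (x : R) (w : oword (AlphaRep beta)),
      IsRep beta x w -> (accepts B (zipw A w) <-> f A = x).

Inductive Rel := Rle' | Rlt' | Rge' | Rgt' | Req' | Rneq'.
Definition relR (r : Rel) (a b : R) : Prop :=
  match r with
  | Rle' => a <= b | Rlt' => a < b | Rge' => a >= b
  | Rgt' => a > b | Req' => a = b | Rneq' => a <> b
  end.

Definition omega_regular_comparator {Sg : Type} (f : oword Sg -> R) (r : Rel) : Prop :=
  exists B : Buchi (Sg * Sg),
    forall A C : oword Sg, accepts B (zipw A C) <-> relR r (f A) (f C).

(* f(A) R f(C) holds iff there are words u, v such that the automaton of f accepts (A, u) and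
   (C, v), u and v represent reals x and y, and x R y.  Buchi automata are closed under
   intersection, letterwise maps and projection, so it suffices that the pairs of representations
   of reals x, y with x R y form an omega-regular set.  Being a representation is a conjunction of
   "always", "eventually", "eventually always" and "infinitely often" conditions on the letters
   tagged with their position type (sign, integer digit, fractional digit).  For the comparison:
   once the integer digits have run out, the number whose base-beta digits are the first k
   integer digits followed by the first k fractional digits is the floor of |x| beta^k.  The
   comparison of these truncations for x and y can be updated letter by letter, since an integer
   digit is more significant and a fractional digit less significant than all digits read
   before, and it eventually agrees with the comparison of |x| and |y|. *)

From Stdlib Require Import Reals Lra Lia List ROrderedType.
From Stdlib Require Import ClassicalEpsilon FunctionalExtensionality.

(** * Closure properties of Buchi automata *)

Definition inf_often (p : nat -> Prop) : Prop := forall n, exists m, (n <= m)%nat /\ p m.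

Definition decide (P : Prop) : bool := if excluded_middle_informative P then true else false.

Lemma decide_spec (P : Prop) : decide P = true <-> P.
Proof. unfold decide; destruct (excluded_middle_informative P); split; auto; discriminate. Qed.

Lemma bool_switch (b : nat -> bool) j k : (j <= k)%nat -> b j = false -> b k = true ->
  exists i, (j <= i < k)%nat /\ b i = false /\ b (S i) = true.
Proof.
  intros Hjk Hj. induction Hjk as [|k Hjk IH]; intros Hk; [congruence|].
  destruct (b k) eqn:E.
  - destruct (IH eq_refl) as [i [Hi Hs]]. exists i; split; [lia | exact Hs].
  - exists k; split; [lia | auto].
Qed.

Lemma inf_often_eventually_const {A : Type} (g : nat -> A) (c : A) (P : A -> Prop) :
  (exists M, forall i, (M <= i)%nat -> g i = c) -> inf_often (fun i => P (g i)) <-> P c.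
Proof.
  intros [M HM]. split.
  - intros H. destruct (H M) as [m [Hm Hp]]. rewrite <- (HM m Hm). exact Hp.
  - intros Hc n. exists (max n M). split; [lia|]. rewrite HM by lia. exact Hc.
Qed.

Lemma finite_prod (X Y : Type) : FiniteType X -> FiniteType Y -> FiniteType (X * Y).
Proof. intros [lx Hx] [ly Hy]. exists (list_prod lx ly). intros [x y]. apply in_prod; auto. Qed.

Lemma finite_unit : FiniteType unit.
Proof. exists (tt :: nil). intros []; simpl; auto. Qed.

Lemma finite_bool : FiniteType bool.
Proof. exists (true :: false :: nil). intros []; simpl; auto. Qed.

Lemma finite_comparison : FiniteType comparison.
Proof. exists (Eq :: Lt :: Gt :: nil). intros []; simpl; auto. Qed.

Section Flag.
Variables P Q : nat -> Prop.
Variable b : nat -> bool.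
Hypothesis b_step : forall i, b (S i) = true <-> if b i then ~ Q i else P i.

Lemma flag_inf_often : inf_often (fun i => b i = true /\ Q i) <-> inf_often P /\ inf_often Q.
Proof.
  split.
  - intros H. split.
    + intros n. destruct (H n) as [m [Hm [Hbm Hq]]].
      assert (Hoff : b (S m) = false).
      { destruct (b (S m)) eqn:E; [|reflexivity].
        apply b_step in E. rewrite Hbm in E. contradiction. }
      destruct (H (S m)) as [m' [Hm' [Hbm' _]]].
      destruct (bool_switch b (S m) m' Hm' Hoff Hbm') as [i [Hi [Hbi Hbi']]].
      exists i. split; [lia|]. apply b_step in Hbi'. rewrite Hbi in Hbi'. exact Hbi'.
    + intros n. destruct (H n) as [m [Hm [_ Hq]]]. exists m. auto.
  - intros [HP HQ] n.
    assert (Hon : exists m, (n <= m)%nat /\ b m = true).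
    { destruct (HP n) as [k [Hk Hp]].
      destruct (b (S k)) eqn:E; [exists (S k); split; [lia | exact E]|].
      exists k. split; [exact Hk|]. destruct (b k) eqn:E'; [reflexivity|].
      pose proof (proj2 (b_step k)) as H. rewrite E' in H. specialize (H Hp). congruence. }
    destruct Hon as [m [Hm Hbm]]. destruct (HQ m) as [k [Hk Hq]].
    destruct (b k) eqn:E; [exists k; split; [lia | split; auto]|].
    destruct (bool_switch (fun i => negb (b i)) m k Hk) as [i [Hi [Hbi Hbi']]];
      [rewrite Hbm; reflexivity | rewrite E; reflexivity|].
    apply Bool.negb_false_iff in Hbi. apply Bool.negb_true_iff in Hbi'.
    exists i. split; [lia | split; [exact Hbi|]].
    apply NNPP. intros Hn. pose proof (proj2 (b_step i)) as H. rewrite Hbi in H. specialize (H Hn).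
    congruence.
Qed.

End Flag.

Section BuchiClosure.
Variables X Y : Type.

Definition buchi_map (g : X -> Y) (B : Buchi Y) : Buchi X :=
  mkBuchi X (bstate B) (bstate_finite _ B) (binit B)
    (fun q a q' => bdelta B q (g a) q') (bacc B).

Lemma accepts_map (g : X -> Y) (B : Buchi Y) (w : oword X) :
  accepts (buchi_map g B) w <-> accepts B (fun i => g (w i)).
Proof. reflexivity. Qed.

Definition buchi_proj (B : Buchi (X * Y)) : Buchi X :=
  mkBuchi X (bstate B) (bstate_finite _ B) (binit B)
    (fun q a q' => exists b, bdelta B q (a, b) q') (bacc B).

Lemma accepts_proj (B : Buchi (X * Y)) (w : oword X) :
  accepts (buchi_proj B) w <-> exists t : oword Y, accepts B (zipw w t).
Proof.
  split.
  - intros [r [Hinit [Hstep Hacc]]].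
    exists (fun i => proj1_sig (constructive_indefinite_description _ (Hstep i))).
    exists r. split; [exact Hinit | split; [|exact Hacc]].
    intros i. unfold zipw. destruct (constructive_indefinite_description _ _). exact b.
  - intros [t [r [Hinit [Hstep Hacc]]]]. exists r. split; [exact Hinit | split; [|exact Hacc]].
    intros i. exists (t i). apply Hstep.
Qed.

(* The flag waits for an accepting state of [B1] while [false], then for one of [B2]. *)
Definition buchi_inter (B1 B2 : Buchi X) : Buchi X :=
  mkBuchi X (bstate B1 * bstate B2 * bool)
    (finite_prod _ _ (finite_prod _ _ (bstate_finite _ B1) (bstate_finite _ B2)) finite_bool)
    (fun s => let '(q1, q2, b) := s in binit B1 q1 /\ binit B2 q2 /\ b = false)
    (fun s a s' => let '(q1, q2, b) := s in let '(q1', q2', b') := s' in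
       bdelta B1 q1 a q1' /\ bdelta B2 q2 a q2' /\
       (b' = true <-> if b then ~ bacc B2 q2 else bacc B1 q1))
    (fun s => let '(q1, q2, b) := s in b = true /\ bacc B2 q2).

Lemma accepts_inter (B1 B2 : Buchi X) (w : oword X) :
  accepts (buchi_inter B1 B2) w <-> accepts B1 w /\ accepts B2 w.
Proof.
  split.
  - intros [r [Hinit [Hstep Hacc]]].
    set (r1 := fun i => fst (fst (r i))). set (r2 := fun i => snd (fst (r i))).
    set (b := fun i => snd (r i)).
    assert (Hrun : forall i, bdelta B1 (r1 i) (w i) (r1 (S i)) /\
                     bdelta B2 (r2 i) (w i) (r2 (S i)) /\
                     (b (S i) = true <-> if b i then ~ bacc B2 (r2 i) else bacc B1 (r1 i))).
    { intros i. specialize (Hstep i). unfold r1, r2, b.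
      destruct (r i) as [[q1 q2] c], (r (S i)) as [[q1' q2'] c']. exact Hstep. }
    assert (Hflag : inf_often (fun i => b i = true /\ bacc B2 (r2 i))).
    { intros n. destruct (Hacc n) as [m [Hm Hq]]. exists m. split; [exact Hm|].
      unfold b, r2. destruct (r m) as [[q1 q2] c]. exact Hq. }
    apply (flag_inf_often (fun i => bacc B1 (r1 i))) in Hflag as [Ha1 Ha2];
      [|intros i; exact (proj2 (proj2 (Hrun i)))].
    assert (Hinit' : binit B1 (r1 0%nat) /\ binit B2 (r2 0%nat)).
    { unfold r1, r2. destruct (r 0%nat) as [[q1 q2] c]. destruct Hinit as [H1 [H2 _]]. auto. }
    split.
    + exists r1. split; [apply Hinit' | split; [intros i; exact (proj1 (Hrun i)) | exact Ha1]].
    + exists r2.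
      split; [apply Hinit' | split; [intros i; exact (proj1 (proj2 (Hrun i))) | exact Ha2]].
  - intros [[r1 [Hi1 [Hs1 Ha1]]] [r2 [Hi2 [Hs2 Ha2]]]].
    set (b := fix b i := match i with
                         | 0 => false
                         | S i => decide (if b i then ~ bacc B2 (r2 i) else bacc B1 (r1 i)) end).
    assert (Hb : forall i, b (S i) = true <-> if b i then ~ bacc B2 (r2 i) else bacc B1 (r1 i))
      by (intros i; apply decide_spec).
    exists (fun i => (r1 i, r2 i, b i)). split; [|split].
    + repeat split; auto.
    + intros i. repeat split; auto; apply Hb.
    + exact (proj2 (flag_inf_often _ _ b Hb) (conj Ha1 Ha2)).
Qed.

End BuchiClosure.

Arguments buchi_map {X Y}. Arguments buchi_proj {X Y}. Arguments buchi_inter {X}.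
Arguments accepts_map {X Y}. Arguments accepts_proj {X Y}. Arguments accepts_inter {X}.

Section LetterAutomata.
Variable X : Type.
Variable p : X -> Prop.

Definition buchi_always : Buchi X :=
  mkBuchi X unit finite_unit (fun _ => True) (fun _ a _ => p a) (fun _ => True).

Lemma accepts_always (w : oword X) : accepts buchi_always w <-> forall i, p (w i).
Proof.
  split.
  - intros [r [_ [Hstep _]]] i. exact (Hstep i).
  - intros H. exists (fun _ => tt). split; [exact I | split; [exact H|]].
    intros n. exists n. split; [lia | exact I].
Qed.

Definition buchi_inf_often : Buchi X :=
  mkBuchi X bool finite_bool (fun _ => True) (fun _ a s' => s' = true -> p a) (fun s => s = true).

Lemma accepts_inf_often (w : oword X) : accepts buchi_inf_often w <-> inf_often (fun i => p (w i)).
Proof.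
  split.
  - intros [r [_ [Hstep Hacc]]] n. destruct (Hacc (S n)) as [[|m] [Hm Hr]]; [lia|].
    exists m. split; [lia | exact (Hstep m Hr)].
  - intros H. exists (fun i => match i with 0 => false | S i => decide (p (w i)) end).
    split; [exact I | split].
    + intros i Hi. exact (proj1 (decide_spec _) Hi).
    + intros n. destruct (H n) as [m [Hm Hp]]. exists (S m). split; [lia|].
      exact (proj2 (decide_spec _) Hp).
Qed.

(* The state switches once, from [false] to [true], at a guessed position. *)
Definition buchi_eventually : Buchi X :=
  mkBuchi X bool finite_bool (fun s => s = false)
    (fun s a s' => (s = true -> s' = true) /\ (s' = true -> s = true \/ p a)) (fun s => s = true).

Lemma accepts_eventually (w : oword X) : accepts buchi_eventually w <-> exists i, p (w i).
Proof.
  split.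
  - intros [r [Hinit [Hstep Hacc]]]. destruct (Hacc 0%nat) as [m [_ Hm]].
    destruct (bool_switch r 0 m (Nat.le_0_l m) Hinit Hm) as [i [_ [Hri Hri']]].
    exists i. destruct (proj2 (Hstep i) Hri') as [E|E]; [congruence | exact E].
  - intros [k Hk]. exists (fun i => Nat.ltb k i). split; [reflexivity | split].
    + intros i. cbn [bdelta buchi_eventually]. rewrite !Nat.ltb_lt. split; [lia|].
      intros Hi. destruct (Nat.eq_dec k i) as [->|]; [right; exact Hk | left; lia].
    + intros n. exists (S (max n k)). split; [lia|]. apply Nat.ltb_lt. lia.
Qed.

Definition buchi_eventually_always : Buchi X :=
  mkBuchi X bool finite_bool (fun s => s = false)
    (fun s a s' => (s = true -> s' = true) /\ (s' = true -> p a)) (fun s => s = true).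

Lemma accepts_eventually_always (w : oword X) :
  accepts buchi_eventually_always w <-> exists N, forall i, (N <= i)%nat -> p (w i).
Proof.
  split.
  - intros [r [_ [Hstep Hacc]]]. destruct (Hacc 0%nat) as [N [_ HN]]. exists N.
    assert (Hon : forall i, (N <= i)%nat -> r i = true).
    { intros i Hi. induction Hi as [|i Hi IH]; [exact HN | exact (proj1 (Hstep i) IH)]. }
    intros i Hi. exact (proj2 (Hstep i) (Hon (S i) (le_S _ _ Hi))).
  - intros [N HN]. exists (fun i => Nat.ltb N i). split; [reflexivity | split].
    + intros i. cbn [bdelta buchi_eventually_always]. rewrite !Nat.ltb_lt.
      split; [lia|]. intros Hi. apply HN. lia.
    + intros n. exists (S (max n N)). split; [lia|]. apply Nat.ltb_lt. lia.
Qed.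

End LetterAutomata.

Arguments buchi_always {X}. Arguments buchi_inf_often {X}. Arguments buchi_eventually {X}.
Arguments buchi_eventually_always {X}. Arguments accepts_always {X}.
Arguments accepts_inf_often {X}.
Arguments accepts_eventually {X}. Arguments accepts_eventually_always {X}.

Fixpoint det_run {X St : Type} (step : St -> X -> St) (s0 : St) (w : oword X) (i : nat) : St :=
  match i with 0 => s0 | S i => step (det_run step s0 w i) (w i) end.

Definition buchi_det {X St : Type} (FSt : FiniteType St) (step : St -> X -> St) (s0 : St)
  (ok : St -> Prop) : Buchi X :=
  mkBuchi X St FSt (fun s => s = s0) (fun s a s' => s' = step s a) ok.

Lemma accepts_det {X St : Type} (FSt : FiniteType St) step (s0 : St) ok (w : oword X) :
  accepts (buchi_det FSt step s0 ok) w <-> inf_often (fun i => ok (det_run step s0 w i)).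
Proof.
  split.
  - intros [r [Hinit [Hstep Hacc]]].
    assert (Hr : forall i, r i = det_run step s0 w i).
    { induction i as [|i IH]; [exact Hinit | simpl; rewrite <- IH; apply Hstep]. }
    intros n. destruct (Hacc n) as [m Hm]. exists m. rewrite <- Hr. exact Hm.
  - intros H. exists (det_run step s0 w). split; [reflexivity | split; [reflexivity | exact H]].
Qed.

Fixpoint iterate {P : Type} (next : P -> P) (p0 : P) (i : nat) : P :=
  match i with 0 => p0 | S i => next (iterate next p0 i) end.

Definition buchi_zip_iter {X P : Type} (FP : FiniteType P) (next : P -> P) (p0 : P)
  (B : Buchi (P * X)) : Buchi X :=
  mkBuchi X (bstate B * P) (finite_prod _ _ (bstate_finite _ B) FP)
    (fun s => binit B (fst s) /\ snd s = p0)
    (fun s a s' => bdelta B (fst s) (snd s, a) (fst s') /\ snd s' = next (snd s))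
    (fun s => bacc B (fst s)).

Lemma accepts_zip_iter {X P : Type} (FP : FiniteType P) next (p0 : P) (B : Buchi (P * X)) w :
  accepts (buchi_zip_iter FP next p0 B) w <-> accepts B (zipw (iterate next p0) w).
Proof.
  split.
  - intros [r [[Hinit Hp0] [Hstep Hacc]]].
    assert (Hp : forall i, snd (r i) = iterate next p0 i).
    { induction i as [|i IH]; [exact Hp0 | simpl; rewrite <- IH; apply Hstep]. }
    exists (fun i => fst (r i)). split; [exact Hinit | split; [|exact Hacc]].
    intros i. unfold zipw. rewrite <- Hp. apply Hstep.
  - intros [r [Hinit [Hstep Hacc]]].
    exists (fun i => (r i, iterate next p0 i)).
    split; [split; [exact Hinit | reflexivity] | split; [|exact Hacc]].
    intros i. split; [exact (Hstep i) | reflexivity].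
Qed.

(** * Base-[beta] digit strings *)

Section Digits.
Local Open Scope nat_scope.

Definition lex (c1 c2 : comparison) : comparison := match c1 with Eq => c2 | _ => c1 end.

Lemma lex_assoc c1 c2 c3 : lex c1 (lex c2 c3) = lex (lex c1 c2) c3.
Proof. destruct c1; reflexivity. Qed.

Lemma compare_lex a a' b b' m : b < m -> b' < m ->
  Nat.compare (a * m + b) (a' * m + b') = lex (Nat.compare a a') (Nat.compare b b').
Proof.
  intros Hb Hb'. destruct (Nat.compare_spec a a') as [->|E|E]; simpl.
  - destruct (Nat.compare_spec b b') as [E'|E'|E'];
      [apply Nat.compare_eq_iff | apply Nat.compare_lt_iff | apply Nat.compare_gt_iff]; lia.
  - apply Nat.compare_lt_iff. nia.
  - apply Nat.compare_gt_iff. nia.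
Qed.

Variable beta : nat.

Fixpoint int_value (z : nat -> nat) (n : nat) : nat :=
  match n with 0 => 0 | S n => int_value z n + z n * beta ^ n end.

Fixpoint frac_value (d : nat -> nat) (n : nat) : nat :=
  match n with 0 => 0 | S n => frac_value d n * beta + d n end.

(* The number with base-[beta] digits [z (k-1) ... z 0 d 0 ... d (k-1)]. *)
Definition trunc (z d : nat -> nat) (k : nat) : nat := int_value z k * beta ^ k + frac_value d k.

Lemma int_value_lt z n : (forall i, z i < beta) -> int_value z n < beta ^ n.
Proof.
  intros H. induction n as [|n IH]; simpl; [lia|].
  specialize (H n). nia.
Qed.

Lemma frac_value_lt d n : (forall i, d i < beta) -> frac_value d n < beta ^ n.
Proof.
  intros H. induction n as [|n IH]; simpl; [lia|].
  specialize (H n). nia.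
Qed.

Lemma int_value_stable z N n : (forall i, N <= i -> z i = 0) -> N <= n ->
  int_value z n = int_value z N.
Proof.
  intros H Hn. induction Hn as [|n Hn IH]; [reflexivity|].
  simpl. rewrite IH, H by lia. lia.
Qed.

Lemma int_value_mono z n m : n <= m -> int_value z n <= int_value z m.
Proof. intros H. induction H as [|m H IH]; simpl; lia. Qed.

Lemma frac_value_growth d n k : (forall i, d i < beta) ->
  frac_value d (n + k) + 1 <= beta ^ k * (frac_value d n + 1).
Proof.
  intros H. induction k as [|k IH]; [rewrite Nat.add_0_r; simpl; lia|].
  replace (n + S k) with (S (n + k)) by lia. rewrite Nat.pow_succ_r'. cbn [frac_value].
  specialize (H (n + k)).
  pose proof (Nat.mul_le_mono_r _ _ beta IH). nia.
Qed.

Lemma frac_value_growth_strict d n k : (forall i, d i < beta) -> d (n + k) < beta - 1 ->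
  frac_value d (S (n + k)) + 1 < beta ^ S k * (frac_value d n + 1).
Proof.
  intros H Hk. pose proof (frac_value_growth d n k H). simpl. nia.
Qed.

Lemma trunc_compare_S z d z' d' k :
  (forall i, z i < beta) -> (forall i, d i < beta) ->
  (forall i, z' i < beta) -> (forall i, d' i < beta) ->
  Nat.compare (trunc z d (S k)) (trunc z' d' (S k)) =
  lex (Nat.compare (z k) (z' k))
      (lex (Nat.compare (trunc z d k) (trunc z' d' k)) (Nat.compare (d k) (d' k))).
Proof.
  intros Hz Hd Hz' Hd'.
  assert (Hbound : forall z d, (forall i, z i < beta) -> (forall i, d i < beta) ->
            trunc z d k * beta + d k < beta ^ k * beta ^ S k).
  { intros z0 d0 H0 H1.
    assert (trunc z0 d0 k < beta ^ k * beta ^ k).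
    { unfold trunc. pose proof (int_value_lt z0 k H0). pose proof (frac_value_lt d0 k H1). nia. }
    specialize (H1 k). rewrite Nat.pow_succ_r'. nia. }
  assert (Hexp : forall z d,
            trunc z d (S k) = z k * (beta ^ k * beta ^ S k) + (trunc z d k * beta + d k)).
  { intros z0 d0. unfold trunc. simpl. ring. }
  rewrite !Hexp, compare_lex by auto. f_equal.
  apply compare_lex; auto.
Qed.

End Digits.

(** * Digit series *)

Lemma limit_le (s : nat -> R) (l c : R) (n : nat) :
  infinite_sum s l -> (forall m, (n <= m)%nat -> sum_f_R0 s m <= c) -> l <= c.
Proof.
  intros Hl H. apply Rnot_lt_le. intros Hc.
  destruct (Hl (l - c)) as [N HN]; [lra|].
  specialize (HN (max N n) (Nat.le_max_l _ _)). specialize (H (max N n) (Nat.le_max_r _ _)).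
  unfold Rdist in HN. apply Rabs_def2 in HN. lra.
Qed.

Definition nat_floor (t : R) : nat := (Z.to_nat (up t) - 1)%nat.

Lemma nat_floor_spec t : 0 <= t -> INR (nat_floor t) <= t < INR (nat_floor t) + 1.
Proof.
  intros Ht. destruct (archimed t) as [H1 H2].
  assert (Hup : (0 < up t)%Z) by (apply lt_IZR; simpl; lra).
  unfold nat_floor. rewrite minus_INR by lia. rewrite INR_IZR_INZ, Znat.Z2Nat.id by lia.
  simpl. lra.
Qed.

Section RealDigits.
Variable beta : nat.
Hypothesis Hbeta : (2 <= beta)%nat.

Definition int_series (z : nat -> nat) (i : nat) : R := INR (z i) * INR beta ^ i.
Definition frac_series (d : nat -> nat) (i : nat) : R := INR (d i) / INR beta ^ S i.

Lemma beta_pow_pos n : 0 < INR beta ^ n.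
Proof. apply pow_lt, lt_0_INR. lia. Qed.

Lemma beta_pow_unbounded (delta : R) : 0 < delta ->
  exists K, forall k, (K <= k)%nat -> 1 < delta * INR beta ^ k.
Proof.
  intros Hd. destruct (Pow_x_infinity (INR beta)) with (b := 2 / delta) as [K HK].
  { rewrite Rabs_pos_eq by apply pos_INR. apply (lt_INR 1). lia. }
  exists K. intros k Hk. specialize (HK k Hk).
  rewrite Rabs_pos_eq in HK by (left; apply beta_pow_pos).
  apply Rge_le, (Rmult_le_compat_l delta) in HK; [|lra].
  replace (delta * (2 / delta)) with 2 in HK by (field; lra). lra.
Qed.

Lemma int_series_sum z N : (forall i, (N <= i)%nat -> z i = 0%nat) ->
  infinite_sum (int_series z) (INR (int_value beta z N)).
Proof.
  intros H.
  assert (Hpart : forall n, sum_f_R0 (int_series z) n = INR (int_value beta z (S n))).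
  { unfold int_series. induction n as [|n IH]; cbn [sum_f_R0 int_value];
      rewrite ?IH, plus_INR, mult_INR, pow_INR; simpl; ring. }
  intros eps Heps. exists N. intros n Hn. rewrite Hpart, (int_value_stable beta z N) by (auto; lia).
  unfold Rdist. rewrite Rminus_diag, Rabs_R0. exact Heps.
Qed.

Lemma frac_partial_sum d n :
  sum_f_R0 (frac_series d) n = INR (frac_value beta d (S n)) / INR beta ^ S n.
Proof.
  assert (Hb : 0 < INR beta) by (apply lt_0_INR; lia).
  unfold frac_series. induction n as [|n IH]; cbn [sum_f_R0 frac_value].
  - simpl. field. lra.
  - pose proof (beta_pow_pos n). rewrite IH, plus_INR, mult_INR. simpl. field. lra.
Qed.

Lemma frac_series_nonneg d i : 0 <= frac_series d i.
Proof. unfold frac_series. apply Rle_mult_inv_pos; [apply pos_INR | apply beta_pow_pos]. Qed.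

Lemma frac_sum_lower d l n : infinite_sum (frac_series d) l ->
  INR (frac_value beta d n) <= l * INR beta ^ n.
Proof.
  intros Hl. destruct n as [|n].
  - simpl. rewrite Rmult_1_r. apply (Rle_trans _ (sum_f_R0 (frac_series d) 0)).
    + apply frac_series_nonneg.
    + apply sum_incr; [exact Hl | apply frac_series_nonneg].
  - pose proof (sum_incr _ n l Hl (frac_series_nonneg d)) as H.
    rewrite frac_partial_sum in H. pose proof (beta_pow_pos (S n)).
    apply (Rmult_le_compat_r (INR beta ^ S n)) in H; [|lra].
    unfold Rdiv in H. rewrite Rmult_assoc, Rinv_l, Rmult_1_r in H by lra. exact H.
Qed.

Lemma frac_sum_upper d l n : (forall i, (d i < beta)%nat) -> infinite_sum (frac_series d) l ->
  l * INR beta ^ n <= INR (frac_value beta d n) + 1.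
Proof.
  intros Hd Hl. pose proof (beta_pow_pos n) as Hn.
  cut (l <= (INR (frac_value beta d n) + 1) / INR beta ^ n).
  { intros H. apply (Rmult_le_compat_r (INR beta ^ n)) in H; [|lra].
    unfold Rdiv in H. rewrite Rmult_assoc, Rinv_l, Rmult_1_r in H by lra. exact H. }
  apply (limit_le _ _ _ n Hl). intros m Hm. rewrite frac_partial_sum.
  pose proof (frac_value_growth beta d n (S m - n) Hd) as G.
  replace (n + (S m - n))%nat with (S m) in G by lia.
  apply le_INR in G. rewrite plus_INR, mult_INR, plus_INR, pow_INR in G. change (INR 1) with 1 in G.
  replace (INR beta ^ S m) with (INR beta ^ (S m - n) * INR beta ^ n)
    by (rewrite <- pow_add; f_equal; lia).
  pose proof (beta_pow_pos (S m - n)).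
  apply (Rmult_le_reg_r (INR beta ^ (S m - n) * INR beta ^ n)); [nra|].
  unfold Rdiv. rewrite Rmult_assoc, Rinv_l, Rmult_1_r by nra.
  replace ((INR (frac_value beta d n) + 1) * / INR beta ^ n * (INR beta ^ (S m - n) * INR beta ^ n))
    with (INR beta ^ (S m - n) * (INR (frac_value beta d n) + 1)) by (field; lra).
  lra.
Qed.

Lemma frac_sum_upper_strict d l n :
  (forall i, (d i < beta)%nat) -> infinite_sum (frac_series d) l ->
  ~ (exists N, forall i, (N <= i)%nat -> d i = (beta - 1)%nat) ->
  l * INR beta ^ n < INR (frac_value beta d n) + 1.
Proof.
  intros Hd Hl Hmax.
  assert (Hk : exists k, (d (n + k) < beta - 1)%nat).
  { apply NNPP. intros Hno. apply Hmax. exists n. intros i Hi.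
    specialize (Hd i). destruct (Nat.eq_dec (d i) (beta - 1)) as [E|E]; [exact E|].
    exfalso. apply Hno. exists (i - n)%nat. replace (n + (i - n))%nat with i by lia. lia. }
  destruct Hk as [k Hk].
  pose proof (frac_value_growth_strict beta d n k Hd Hk) as G.
  apply lt_INR in G. rewrite plus_INR, mult_INR, plus_INR, pow_INR in G. change (INR 1) with 1 in G.
  pose proof (frac_sum_upper d l (S (n + k)) Hd Hl) as U.
  replace (INR beta ^ S (n + k)) with (INR beta ^ S k * INR beta ^ n) in U
    by (rewrite <- pow_add; f_equal; lia).
  pose proof (beta_pow_pos (S k)). nra.
Qed.

Lemma frac_series_converges d :
  (forall i, (d i < beta)%nat) -> exists l, infinite_sum (frac_series d) l.
Proof.
  intros Hd.
  assert (Hgrow : Un_growing (sum_f_R0 (frac_series d))).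
  { intros n. simpl. pose proof (frac_series_nonneg d (S n)). lra. }
  assert (Hbound : bound (EUn (sum_f_R0 (frac_series d)))).
  { exists 1. intros x [n ->]. rewrite frac_partial_sum. pose proof (beta_pow_pos (S n)).
    pose proof (frac_value_lt beta d (S n) Hd) as Hlt. apply lt_INR in Hlt. rewrite pow_INR in Hlt.
    apply (Rmult_le_reg_r (INR beta ^ S n)); [lra|].
    unfold Rdiv. rewrite Rmult_assoc, Rinv_l by lra. lra. }
  destruct (growing_cv _ Hgrow Hbound) as [l Hl]. exists l. exact Hl.
Qed.

Definition scaled_floor (s : R) (n : nat) : nat := nat_floor (s * INR beta ^ n).
Definition expansion_digit (s : R) (n : nat) : nat :=
  (scaled_floor s (S n) - beta * scaled_floor s n)%nat.

Section Expansion.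
Variable s : R.
Hypothesis Hs : 0 <= s < 1.

Lemma scaled_floor_spec n : INR (scaled_floor s n) <= s * INR beta ^ n < INR (scaled_floor s n) + 1.
Proof. apply nat_floor_spec. pose proof (beta_pow_pos n). nra. Qed.

Lemma scaled_floor_S n :
  (beta * scaled_floor s n <= scaled_floor s (S n) < beta * scaled_floor s n + beta)%nat.
Proof.
  assert (Hb : 0 < INR beta) by (apply lt_0_INR; lia).
  destruct (scaled_floor_spec n) as [A1 A2]. destruct (scaled_floor_spec (S n)) as [B1 B2].
  simpl in B1, B2. split.
  - apply Nat.lt_succ_r, INR_lt. rewrite S_INR, mult_INR. nra.
  - apply INR_lt. rewrite plus_INR, mult_INR. nra.
Qed.

Lemma expansion_digit_lt n : (expansion_digit s n < beta)%nat.
Proof. unfold expansion_digit. pose proof (scaled_floor_S n). lia. Qed.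

Lemma frac_value_expansion n : frac_value beta (expansion_digit s) n = scaled_floor s n.
Proof.
  induction n as [|n IH]; simpl.
  - destruct (scaled_floor_spec 0) as [H _]. simpl in H.
    assert (H1 : INR (scaled_floor s 0) < INR 1) by (simpl; lra). apply INR_lt in H1. lia.
  - rewrite IH. unfold expansion_digit. pose proof (scaled_floor_S n). lia.
Qed.

Lemma expansion_not_eventually_max :
  ~ (exists N, forall i, (N <= i)%nat -> expansion_digit s i = (beta - 1)%nat).
Proof.
  intros [M HM].
  (* Maximal digits from [M] on would push [s] up to [(scaled_floor s M + 1) / beta ^ M]. *)
  assert (Hmax : forall k, (scaled_floor s (M + k) + 1 = beta ^ k * (scaled_floor s M + 1))%nat).
  { induction k as [|k IH]; [simpl; rewrite Nat.add_0_r; lia|].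
    replace (M + S k)%nat with (S (M + k)) by lia.
    specialize (HM (M + k)%nat ltac:(lia)). unfold expansion_digit in HM.
    pose proof (scaled_floor_S (M + k)).
    rewrite Nat.pow_succ_r', <- Nat.mul_assoc, <- IH. lia. }
  destruct (scaled_floor_spec M) as [_ HM2].
  destruct (beta_pow_unbounded (INR (scaled_floor s M) + 1 - s * INR beta ^ M)) as [K HK]; [lra|].
  specialize (HK K (le_n K)). destruct (scaled_floor_spec (M + K)) as [H3 _].
  specialize (Hmax K). apply (f_equal INR) in Hmax.
  rewrite plus_INR, mult_INR, plus_INR, pow_INR in Hmax. change (INR 1) with 1 in Hmax.
  rewrite pow_add in H3. nra.
Qed.

Lemma expansion_sum : infinite_sum (frac_series (expansion_digit s)) s.
Proof.
  intros eps Heps. destruct (beta_pow_unbounded eps Heps) as [K HK]. exists K. intros n Hn.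
  rewrite frac_partial_sum, frac_value_expansion. specialize (HK (S n) ltac:(lia)).
  destruct (scaled_floor_spec (S n)) as [A1 A2]. pose proof (beta_pow_pos (S n)).
  unfold Rdist. rewrite Rabs_left1.
  - apply (Rmult_lt_reg_r (INR beta ^ S n)); [lra|].
    replace (- (INR (scaled_floor s (S n)) / INR beta ^ S n - s) * INR beta ^ S n)
      with (s * INR beta ^ S n - INR (scaled_floor s (S n))) by (field; lra). lra.
  - apply (Rmult_le_reg_r (INR beta ^ S n)); [lra|].
    replace ((INR (scaled_floor s (S n)) / INR beta ^ S n - s) * INR beta ^ S n)
      with (INR (scaled_floor s (S n)) - s * INR beta ^ S n) by (field; lra). lra.
Qed.

End Expansion.

Lemma int_expansion (N : nat) :
  exists z, (forall i, (z i < beta)%nat) /\ (forall i, (N <= i)%nat -> z i = 0%nat) /\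
    int_value beta z N = N.
Proof.
  exists (fun i => (N / beta ^ i) mod beta)%nat. split; [|split].
  - intros i. apply Nat.mod_upper_bound. lia.
  - intros i Hi. rewrite Nat.div_small; [apply Nat.Div0.mod_0_l|].
    apply (Nat.le_lt_trans _ i); [exact Hi | apply Nat.pow_gt_lin_r; lia].
  - assert (Hmod : forall n, int_value beta (fun i => (N / beta ^ i) mod beta) n = N mod beta ^ n).
    { induction n as [|n IH]; [cbn [int_value Nat.pow]; rewrite Nat.mod_1_r; reflexivity|].
      cbn [int_value]. rewrite IH, Nat.pow_succ_r', (Nat.mul_comm beta), Nat.Div0.mod_mul_r. ring. }
    rewrite Hmod. apply Nat.mod_small, Nat.pow_gt_lin_r. lia.
Qed.

End RealDigits.

(** * Representations of reals *)

Section Representations.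
Variable beta : nat.
Hypothesis Hbeta : (2 <= beta)%nat.

Definition is_minus (a : AlphaRep beta) : bool := match a with AMinus => true | _ => false end.
(* Non-digit letters are read as the digit 0. *)
Definition dig (a : AlphaRep beta) : nat := match a with ADig d => dval d | _ => 0%nat end.
Definition int_digit (u : oword (AlphaRep beta)) (k : nat) : nat := dig (u (2 * k + 1)%nat).
Definition frac_digit (u : oword (AlphaRep beta)) (k : nat) : nat := dig (u (2 * k + 2)%nat).

Lemma dig_lt a : (dig a < beta)%nat.
Proof. destruct a as [| |[d Hd]]; simpl; lia. Qed.

Definition rep_shape (u : oword (AlphaRep beta)) : Prop :=
  (u 0%nat = APlus \/ u 0%nat = AMinus) /\
  forall k, (exists d, u (2 * k + 1)%nat = ADig d) /\ (exists d, u (2 * k + 2)%nat = ADig d).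

Definition digit_rep (x : R) (u : oword (AlphaRep beta)) : Prop :=
  rep_shape u /\
  ((0 <= x /\ u 0%nat = APlus) \/ (x < 0 /\ u 0%nat = AMinus)) /\
  (exists N b, (forall i, (N <= i)%nat -> int_digit u i = 0%nat) /\
     infinite_sum (frac_series beta (frac_digit u)) b /\
     Rabs x = INR (int_value beta (int_digit u) N) + b) /\
  ~ (exists N, forall i, (N <= i)%nat -> frac_digit u i = (beta - 1)%nat).

Lemma beta_neq_0 : beta <> 0%nat.
Proof. lia. Qed.

Definition to_digit (n : nat) : Digit beta :=
  exist _ (n mod beta)%nat (Nat.mod_upper_bound n beta beta_neq_0).

Definition letter_digit (a : AlphaRep beta) : Digit beta :=
  match a with ADig d => d | _ => to_digit 0 end.

Lemma digit_rep_of_IsRep x u : IsRep beta x u -> digit_rep x u.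
Proof.
  intros [z [fr [Hsign [Hw [[N HN] [Hmax [a [b [Ha [Hb Hx]]]]]]]]]].
  assert (Ez : int_digit u = fun k => dval (z k)).
  { apply functional_extensionality. intros k. unfold int_digit.
    rewrite (proj1 (Hw k)). reflexivity. }
  assert (Ef : frac_digit u = fun k => dval (fr k)).
  { apply functional_extensionality. intros k. unfold frac_digit.
    rewrite (proj2 (Hw k)). reflexivity. }
  split; [|split; [|split]].
  - split; [destruct Hsign as [[_ E]|[_ E]]; rewrite E; auto|].
    intros k. split; [exists (z k) | exists (fr k)]; apply Hw.
  - destruct Hsign as [[H E]|[H E]]; [left|right]; auto.
  - exists N, b. rewrite Ez, Ef. split; [exact HN | split; [exact Hb|]].
    rewrite Hx. f_equal. exact (uniqueness_sum _ _ _ Ha (int_series_sum beta _ N HN)).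
  - rewrite Ef. exact Hmax.
Qed.

Lemma IsRep_of_digit_rep x u : digit_rep x u -> IsRep beta x u.
Proof.
  intros [[Hs0 Hs] [Hsign [[N [b [HN [Hb Hx]]]] Hmax]]].
  exists (fun k => letter_digit (u (2 * k + 1)%nat)), (fun k => letter_digit (u (2 * k + 2)%nat)).
  assert (Ez : forall k, dval (letter_digit (u (2 * k + 1)%nat)) = int_digit u k).
  { intros k. destruct (proj1 (Hs k)) as [d E]. unfold int_digit. rewrite E. reflexivity. }
  assert (Ef : forall k, dval (letter_digit (u (2 * k + 2)%nat)) = frac_digit u k).
  { intros k. destruct (proj2 (Hs k)) as [d E]. unfold frac_digit. rewrite E. reflexivity. }
  split; [exact Hsign | split; [|split; [|split]]].
  - intros k. destruct (Hs k) as [[d1 E1] [d2 E2]]. rewrite E1, E2. auto.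
  - exists N. intros i Hi. rewrite Ez. exact (HN i Hi).
  - intros [M HM]. apply Hmax. exists M. intros i Hi. rewrite <- Ef. exact (HM i Hi).
  - exists (INR (int_value beta (int_digit u) N)), b. split; [|split; [|exact Hx]].
    + replace (fun i => INR (dval (letter_digit (u (2 * i + 1)%nat))) * INR beta ^ i)
        with (int_series beta (int_digit u))
        by (apply functional_extensionality; intros i; unfold int_series; rewrite Ez; reflexivity).
      exact (int_series_sum beta _ N HN).
    + replace (fun i => INR (dval (letter_digit (u (2 * i + 2)%nat))) / INR beta ^ S i)
        with (frac_series beta (frac_digit u))
        by (apply functional_extensionality; intros i; unfold frac_series; rewrite Ef; reflexivity).
      exact Hb.
Qed.

Lemma IsRep_iff_digit_rep x u : IsRep beta x u <-> digit_rep x u.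
Proof. split; [apply digit_rep_of_IsRep | apply IsRep_of_digit_rep]. Qed.

Definition rep_word (neg : bool) (z d : nat -> nat) : oword (AlphaRep beta) :=
  fun i => match i with
           | 0 => if neg then AMinus else APlus
           | S j => ADig (to_digit (if Nat.even j then z (Nat.div2 j) else d (Nat.div2 j)))
           end.

Lemma rep_word_int neg z d k : rep_word neg z d (2 * k + 1)%nat = ADig (to_digit (z k)).
Proof. unfold rep_word. rewrite Nat.add_1_r, Nat.even_even, Nat.div2_double. reflexivity. Qed.

Lemma rep_word_frac neg z d k : rep_word neg z d (2 * k + 2)%nat = ADig (to_digit (d k)).
Proof.
  unfold rep_word. replace (2 * k + 2)%nat with (S (2 * k + 1)) by lia.
  rewrite Nat.even_odd, Nat.div2_odd'. reflexivity.
Qed.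

Lemma IsRep_exists x : exists u, IsRep beta x u.
Proof.
  set (t := Rabs x). assert (Ht : 0 <= t) by apply Rabs_pos.
  set (N := nat_floor t). destruct (nat_floor_spec t Ht) as [HN1 HN2]. fold N in HN1, HN2.
  destruct (int_expansion beta Hbeta N) as [z [Hz [HzN Hzv]]].
  assert (Hs : 0 <= t - INR N < 1) by lra.
  set (d := expansion_digit beta (t - INR N)).
  set (neg := if Rlt_dec x 0 then true else false).
  exists (rep_word neg z d). apply IsRep_of_digit_rep.
  assert (Ez : int_digit (rep_word neg z d) = z).
  { apply functional_extensionality. intros k. unfold int_digit. rewrite rep_word_int.
    apply Nat.mod_small, Hz. }
  assert (Ed : frac_digit (rep_word neg z d) = d).
  { apply functional_extensionality. intros k. unfold frac_digit. rewrite rep_word_frac.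
    apply Nat.mod_small, (expansion_digit_lt beta Hbeta _ Hs). }
  unfold digit_rep. rewrite Ez, Ed. split; [|split; [|split]].
  - split; [unfold rep_word, neg; destruct (Rlt_dec x 0); auto|].
    intros k. rewrite rep_word_int, rep_word_frac. split; eexists; reflexivity.
  - unfold rep_word, neg. destruct (Rlt_dec x 0); [right | left]; split; auto; lra.
  - exists N, (t - INR N). split; [exact HzN | split; [exact (expansion_sum beta Hbeta _ Hs)|]].
    rewrite Hzv. fold t. ring.
  - exact (expansion_not_eventually_max beta Hbeta _ Hs).
Qed.

Definition word_trunc (u : oword (AlphaRep beta)) (k : nat) : nat :=
  trunc beta (int_digit u) (frac_digit u) k.

Lemma word_trunc_floor x u : digit_rep x u ->
  exists N, forall k, (N <= k)%nat ->
    INR (word_trunc u k) <= Rabs x * INR beta ^ k < INR (word_trunc u k) + 1.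
Proof.
  intros [_ [_ [[N [b [HN [Hb Hx]]]] Hmax]]]. exists N. intros k Hk.
  pose proof (frac_sum_lower beta Hbeta _ b k Hb).
  pose proof (frac_sum_upper_strict beta Hbeta (frac_digit u) b k (fun i => dig_lt _) Hb Hmax).
  unfold word_trunc, trunc. rewrite (int_value_stable beta _ N k HN Hk).
  rewrite plus_INR, mult_INR, pow_INR, Hx, Rmult_plus_distr_r. lra.
Qed.

Lemma word_trunc_eventually_lt x y u v : digit_rep x u -> digit_rep y v -> Rabs x < Rabs y ->
  exists M, forall k, (M <= k)%nat -> (word_trunc u k < word_trunc v k)%nat.
Proof.
  intros Hx Hy Hlt.
  destruct (word_trunc_floor x u Hx) as [Nx Fx]. destruct (word_trunc_floor y v Hy) as [Ny Fy].
  destruct (beta_pow_unbounded beta Hbeta (Rabs y - Rabs x)) as [K HK]; [lra|].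
  exists (max K (max Nx Ny)). intros k Hk.
  specialize (HK k ltac:(lia)). specialize (Fx k ltac:(lia)). specialize (Fy k ltac:(lia)).
  apply INR_lt. nra.
Qed.

Lemma word_trunc_eventually_eq x y u v : digit_rep x u -> digit_rep y v -> Rabs x = Rabs y ->
  exists M, forall k, (M <= k)%nat -> word_trunc u k = word_trunc v k.
Proof.
  intros Hx Hy Heq.
  destruct (word_trunc_floor x u Hx) as [Nx Fx]. destruct (word_trunc_floor y v Hy) as [Ny Fy].
  exists (max Nx Ny). intros k Hk.
  specialize (Fx k ltac:(lia)). specialize (Fy k ltac:(lia)). rewrite Heq in Fx.
  assert (INR (word_trunc u k) < INR (S (word_trunc v k)) /\
          INR (word_trunc v k) < INR (S (word_trunc u k)))
    as [H1 H2] by (rewrite !S_INR; lra).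
  apply INR_lt in H1, H2. lia.
Qed.

Lemma word_trunc_compare x y u v : digit_rep x u -> digit_rep y v ->
  exists M, forall k, (M <= k)%nat ->
    Nat.compare (word_trunc u k) (word_trunc v k) = Rcompare (Rabs x) (Rabs y).
Proof.
  intros Hx Hy. destruct (Rcompare_spec (Rabs x) (Rabs y)) as [E|L|G].
  - destruct (word_trunc_eventually_eq x y u v Hx Hy E) as [M HM].
    exists M. intros k Hk. rewrite (HM k Hk). apply Nat.compare_refl.
  - destruct (word_trunc_eventually_lt x y u v Hx Hy L) as [M HM].
    exists M. intros k Hk. apply Nat.compare_lt_iff, HM, Hk.
  - destruct (word_trunc_eventually_lt y x v u Hy Hx G) as [M HM].
    exists M. intros k Hk. apply Nat.compare_gt_iff, HM, Hk.
Qed.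

Definition valid_word (u : oword (AlphaRep beta)) : Prop :=
  rep_shape u /\
  (exists N, forall i, (N <= i)%nat -> int_digit u i = 0%nat) /\
  ~ (exists N, forall i, (N <= i)%nat -> frac_digit u i = (beta - 1)%nat) /\
  (u 0%nat = AMinus -> exists k, int_digit u k <> 0%nat \/ frac_digit u k <> 0%nat).

Lemma digit_value_pos u N b :
  (forall i, (N <= i)%nat -> int_digit u i = 0%nat) ->
  infinite_sum (frac_series beta (frac_digit u)) b ->
  ~ (exists M, forall i, (M <= i)%nat -> frac_digit u i = (beta - 1)%nat) ->
  0 < INR (int_value beta (int_digit u) N) + b <->
  exists k, int_digit u k <> 0%nat \/ frac_digit u k <> 0%nat.
Proof.
  intros HN Hb Hmax. pose proof (pos_INR (int_value beta (int_digit u) N)).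
  split.
  - intros Hpos. apply NNPP. intros Hzero.
    assert (Hz : forall k, int_digit u k = 0%nat /\ frac_digit u k = 0%nat)
      by (intros k; split; apply NNPP; intros C; apply Hzero; exists k; auto).
    assert (HI : int_value beta (int_digit u) N = 0%nat)
      by (rewrite (int_value_stable beta _ 0 N); [reflexivity | intros i _; apply Hz | lia]).
    assert (HF : forall n, frac_value beta (frac_digit u) n = 0%nat)
      by (induction n as [|n IH]; simpl; [|rewrite IH, (proj2 (Hz n))]; lia).
    rewrite HI in Hpos. simpl in Hpos.
    destruct (beta_pow_unbounded beta Hbeta b ltac:(lra)) as [K HK]. specialize (HK K (le_n K)).
    pose proof (frac_sum_upper_strict beta Hbeta (frac_digit u) b K (fun i => dig_lt _) Hb Hmax)
      as U.
    rewrite HF in U. simpl in U. lra.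
  - intros [k [Hk|Hk]].
    + assert (HI : (1 <= int_value beta (int_digit u) N)%nat).
      { rewrite <- (int_value_stable beta _ N (max N (S k)) HN) by lia.
        apply (Nat.le_trans _ (int_value beta (int_digit u) (S k))); [|apply int_value_mono; lia].
        simpl. assert (1 <= beta ^ k)%nat by (apply Nat.neq_0_lt_0, Nat.pow_nonzero; lia). nia. }
      apply le_INR in HI. pose proof (frac_sum_lower beta Hbeta _ b 0 Hb). simpl in *. lra.
    + pose proof (frac_sum_lower beta Hbeta _ b (S k) Hb) as L.
      assert (H1 : (1 <= frac_value beta (frac_digit u) (S k))%nat) by (simpl; lia).
      apply le_INR in H1. change (INR 1) with 1 in H1.
      pose proof (beta_pow_pos beta Hbeta (S k)). nra.
Qed.

Lemma valid_word_iff u : valid_word u <-> exists x, digit_rep x u.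
Proof.
  split.
  - intros [Hshape [[N HN] [Hmax Hneg]]].
    destruct (frac_series_converges beta Hbeta (frac_digit u) (fun i => dig_lt _)) as [b Hb].
    set (v := INR (int_value beta (int_digit u) N) + b).
    assert (Hv0 : 0 <= v).
    { pose proof (frac_sum_lower beta Hbeta _ b 0 Hb).
      pose proof (pos_INR (int_value beta (int_digit u) N)).
      unfold v. simpl in *. lra. }
    exists (if is_minus (u 0%nat) then - v else v).
    split; [exact Hshape | split; [|split; [|exact Hmax]]].
    + destruct (proj1 Hshape) as [E|E]; rewrite E; simpl; [left | right]; split; auto.
      apply Ropp_lt_gt_0_contravar, (digit_value_pos u N b HN Hb Hmax), Hneg, E.
    + exists N, b. split; [exact HN | split; [exact Hb|]].
      destruct (is_minus (u 0%nat)); [rewrite Rabs_Ropp|]; rewrite Rabs_pos_eq; auto.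
  - intros [x [Hshape [Hsign [[N [b [HN [Hb Hx]]]] Hmax]]]].
    split; [exact Hshape | split; [exists N; exact HN | split; [exact Hmax|]]].
    intros E. apply (digit_value_pos u N b HN Hb Hmax). rewrite <- Hx.
    destruct Hsign as [[_ E']|[Hneg _]]; [congruence|]. apply Rabs_pos_lt. lra.
Qed.

End Representations.

Arguments is_minus {beta}. Arguments dig {beta}. Arguments int_digit {beta}.
Arguments frac_digit {beta}. Arguments word_trunc {beta}.

(** * Automata reading representations *)

Inductive phase := SignPos | IntPos | FracPos.

Definition next_phase (p : phase) : phase :=
  match p with SignPos => IntPos | IntPos => FracPos | FracPos => IntPos end.

Lemma finite_phase : FiniteType phase.
Proof. exists (SignPos :: IntPos :: FracPos :: nil). intros []; simpl; auto. Qed.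

Definition position_phase : nat -> phase := iterate next_phase SignPos.

Lemma position_phase_int k : position_phase (2 * k + 1) = IntPos.
Proof.
  induction k as [|k IH]; [reflexivity|].
  replace (2 * S k + 1)%nat with (S (S (2 * k + 1))) by lia.
  change (next_phase (next_phase (position_phase (2 * k + 1))) = IntPos). rewrite IH. reflexivity.
Qed.

Lemma position_phase_frac k : position_phase (2 * k + 2) = FracPos.
Proof.
  replace (2 * k + 2)%nat with (S (2 * k + 1)) by lia.
  change (next_phase (position_phase (2 * k + 1)) = FracPos).
  rewrite position_phase_int. reflexivity.
Qed.

Lemma position_cases i :
  i = 0%nat \/ (exists k, i = 2 * k + 1)%nat \/ (exists k, i = 2 * k + 2)%nat.
Proof.
  induction i as [|i [->|[[k ->]|[k ->]]]]; auto.
  - right; left; exists 0%nat; lia.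
  - right; right; exists k; lia.
  - right; left; exists (S k); lia.
Qed.

Section ValidWords.
Variable beta : nat.
Hypothesis Hbeta : (2 <= beta)%nat.

Definition shape_letter (l : phase * AlphaRep beta) : Prop :=
  match l with
  | (SignPos, APlus) | (SignPos, AMinus) | (IntPos, ADig _) | (FracPos, ADig _) => True
  | _ => False
  end.
Definition int_zero_letter (l : phase * AlphaRep beta) : Prop :=
  fst l = IntPos -> dig (snd l) = 0%nat.
Definition frac_low_letter (l : phase * AlphaRep beta) : Prop :=
  fst l = FracPos /\ (dig (snd l) < beta - 1)%nat.
(* A [+] sign, or else a nonzero digit somewhere: this excludes the word [-0]. *)
Definition sign_letter (l : phase * AlphaRep beta) : Prop :=
  (fst l = SignPos /\ snd l = APlus) \/ (fst l <> SignPos /\ dig (snd l) <> 0%nat).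

Section Word.
Variable u : oword (AlphaRep beta).

Lemma shape_letters_iff : (forall i, shape_letter (position_phase i, u i)) <-> rep_shape beta u.
Proof.
  split.
  - intros H. split.
    + specialize (H 0%nat). simpl in H. destruct (u 0%nat); tauto.
    + intros k. pose proof (H (2 * k + 1)%nat) as H1. pose proof (H (2 * k + 2)%nat) as H2.
      rewrite position_phase_int in H1. rewrite position_phase_frac in H2.
      split; [destruct (u (2 * k + 1)%nat) | destruct (u (2 * k + 2)%nat)];
        try contradiction; eexists; reflexivity.
  - intros [H0 H] i. destruct (position_cases i) as [->|[[k ->]|[k ->]]].
    + simpl. destruct H0 as [-> | ->]; exact I.
    + rewrite position_phase_int. destruct (proj1 (H k)) as [d ->]. exact I.
    + rewrite position_phase_frac. destruct (proj2 (H k)) as [d ->]. exact I.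
Qed.

Lemma int_zero_letters_iff :
  (exists N, forall i, (N <= i)%nat -> int_zero_letter (position_phase i, u i)) <->
  (exists N, forall k, (N <= k)%nat -> int_digit u k = 0%nat).
Proof.
  split.
  - intros [N HN]. exists N. intros k Hk.
    apply (HN (2 * k + 1)%nat); [lia|]. apply position_phase_int.
  - intros [N HN]. exists (2 * N + 1)%nat. intros i Hi Hp.
    destruct (position_cases i) as [->|[[k ->]|[k ->]]]; [lia| |].
    + apply HN. lia.
    + cbn [fst snd] in Hp. rewrite position_phase_frac in Hp. discriminate.
Qed.

Lemma frac_low_letters_iff :
  inf_often (fun i => frac_low_letter (position_phase i, u i)) <->
  ~ (exists N, forall k, (N <= k)%nat -> frac_digit u k = (beta - 1)%nat).
Proof.
  split.
  - intros H [N HN]. destruct (H (2 * N + 2)%nat) as [i [Hi [Hp Hd]]]. cbn [fst snd] in Hp, Hd.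
    destruct (position_cases i) as [->|[[k ->]|[k ->]]].
    + discriminate.
    + rewrite position_phase_int in Hp. discriminate.
    + specialize (HN k ltac:(lia)). unfold frac_digit in HN. lia.
  - intros Hmax n. apply NNPP. intros Hno. apply Hmax. exists n. intros k Hk.
    pose proof (dig_lt beta Hbeta (u (2 * k + 2)%nat)).
    destruct (Nat.eq_dec (frac_digit u k) (beta - 1)) as [E|E]; [exact E|].
    exfalso. apply Hno. exists (2 * k + 2)%nat. split; [lia|].
    split; [apply position_phase_frac | unfold frac_digit in E; cbn [snd]; lia].
Qed.

Lemma sign_letters_iff : rep_shape beta u ->
  (exists i, sign_letter (position_phase i, u i)) <->
  (u 0%nat = AMinus -> exists k, int_digit u k <> 0%nat \/ frac_digit u k <> 0%nat).
Proof.
  intros [H0 _]. split.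
  - intros [i [[Hp Hu]|[Hp Hd]]] Hneg; cbn [fst snd] in *.
    + destruct (position_cases i) as [->|[[k ->]|[k ->]]].
      * congruence.
      * rewrite position_phase_int in Hp. discriminate.
      * rewrite position_phase_frac in Hp. discriminate.
    + destruct (position_cases i) as [->|[[k ->]|[k ->]]].
      * contradiction.
      * exists k. left. exact Hd.
      * exists k. right. exact Hd.
  - intros Hneg. destruct H0 as [E|E].
    + exists 0%nat. left. split; [reflexivity | exact E].
    + destruct (Hneg E) as [k [Hk|Hk]].
      * exists (2 * k + 1)%nat. right. rewrite position_phase_int. split; [discriminate | exact Hk].
      * exists (2 * k + 2)%nat. right. rewrite position_phase_frac.
        split; [discriminate | exact Hk].
Qed.

End Word.

Definition valid_buchi : Buchi (AlphaRep beta) :=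
  buchi_zip_iter finite_phase next_phase SignPos
    (buchi_inter (buchi_always shape_letter)
      (buchi_inter (buchi_eventually_always int_zero_letter)
        (buchi_inter (buchi_inf_often frac_low_letter) (buchi_eventually sign_letter)))).

Lemma accepts_valid_buchi u : accepts valid_buchi u <-> exists x, IsRep beta x u.
Proof.
  unfold valid_buchi. rewrite accepts_zip_iter, !accepts_inter, accepts_always,
    accepts_eventually_always, accepts_inf_often, accepts_eventually.
  change (iterate next_phase SignPos) with position_phase. unfold zipw.
  rewrite shape_letters_iff, int_zero_letters_iff, frac_low_letters_iff.
  assert (Hiff : (exists x, IsRep beta x u) <-> valid_word beta u).
  { rewrite valid_word_iff by exact Hbeta. split; intros [x Hx]; exists x;
      apply (IsRep_iff_digit_rep beta Hbeta); exact Hx. }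
  rewrite Hiff. unfold valid_word. split.
  - intros [Hs [Hz [Hf Hneg]]]. split; [exact Hs | split; [exact Hz | split; [exact Hf|]]].
    exact (proj1 (sign_letters_iff u Hs) Hneg).
  - intros [Hs [Hz [Hf Hneg]]]. split; [exact Hs | split; [exact Hz | split; [exact Hf|]]].
    exact (proj2 (sign_letters_iff u Hs) Hneg).
Qed.

End ValidWords.

Definition rel_holds (r : Rel) (c : comparison) : Prop :=
  match r with
  | Rle' => c <> Gt | Rlt' => c = Lt | Rge' => c <> Lt
  | Rgt' => c = Gt | Req' => c = Eq | Rneq' => c <> Eq
  end.

Lemma rel_holds_Rcompare r x y : rel_holds r (Rcompare x y) <-> relR r x y.
Proof.
  destruct (Rcompare_spec x y) as [E|L|G]; destruct r; simpl;
    split; intros; try discriminate; try lra; congruence.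
Qed.

Definition signed_compare (neg1 neg2 : bool) (c : comparison) : comparison :=
  match neg1, neg2 with
  | false, false => c | true, true => CompOpp c | false, true => Gt | true, false => Lt
  end.

Lemma Rcompare_signed x y (neg1 neg2 : bool) :
  (0 <= x /\ neg1 = false) \/ (x < 0 /\ neg1 = true) ->
  (0 <= y /\ neg2 = false) \/ (y < 0 /\ neg2 = true) ->
  Rcompare x y = signed_compare neg1 neg2 (Rcompare (Rabs x) (Rabs y)).
Proof.
  intros [[Hx ->]|[Hx ->]] [[Hy ->]|[Hy ->]]; simpl;
    rewrite ?(Rabs_pos_eq x), ?(Rabs_pos_eq y), ?(Rabs_left x), ?(Rabs_left y) by lra;
    destruct (Rcompare_spec x y), (Rcompare_spec (- x) (- y)); simpl; auto; lra.
Qed.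

Lemma finite_cmp_state : FiniteType (bool * bool * comparison).
Proof. repeat apply finite_prod; auto using finite_bool, finite_comparison. Qed.

Section Comparison.
Variable beta : nat.
Hypothesis Hbeta : (2 <= beta)%nat.

(* The register holds the comparison of the truncations read so far: an integer digit
   is more significant, a fractional digit less significant, than everything before it. *)
Definition cmp_step (s : bool * bool * comparison)
  (l : phase * (AlphaRep beta * AlphaRep beta)) : bool * bool * comparison :=
  let '(neg1, neg2, c) := s in
  match l with
  | (SignPos, (a, b)) => (is_minus a, is_minus b, Eq)
  | (IntPos, (a, b)) => (neg1, neg2, lex (Nat.compare (dig a) (dig b)) c)
  | (FracPos, (a, b)) => (neg1, neg2, lex c (Nat.compare (dig a) (dig b)))
  end.

Definition cmp_verdict (s : bool * bool * comparison) : comparison :=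
  let '(neg1, neg2, c) := s in signed_compare neg1 neg2 c.

Definition cmp_buchi (r : Rel) : Buchi (AlphaRep beta * AlphaRep beta) :=
  buchi_zip_iter finite_phase next_phase SignPos
    (buchi_det finite_cmp_state cmp_step (false, false, Eq) (fun s => rel_holds r (cmp_verdict s))).

Section Run.
Variables u v : oword (AlphaRep beta).

Definition cmp_run : nat -> bool * bool * comparison :=
  det_run cmp_step (false, false, Eq) (zipw position_phase (zipw u v)).

Lemma cmp_run_odd k :
  cmp_run (2 * k + 1) =
  (is_minus (u 0%nat), is_minus (v 0%nat), Nat.compare (word_trunc u k) (word_trunc v k)).
Proof.
  induction k as [|k IH]; [reflexivity|].
  replace (2 * S k + 1)%nat with (S (S (2 * k + 1))) by lia.
  change (cmp_run (S (S (2 * k + 1)))) with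
    (cmp_step
       (cmp_step (cmp_run (2 * k + 1)) (position_phase (2 * k + 1), (u (2 * k + 1), v (2 * k + 1))))
       (position_phase (S (2 * k + 1)), (u (S (2 * k + 1)), v (S (2 * k + 1)))))%nat.
  replace (S (2 * k + 1)) with (2 * k + 2)%nat by lia.
  rewrite IH, position_phase_int, position_phase_frac. simpl.
  unfold word_trunc. rewrite (trunc_compare_S beta); try (intros; apply dig_lt; exact Hbeta).
  rewrite lex_assoc. reflexivity.
Qed.

Lemma cmp_run_even k :
  cmp_run (2 * k + 2) =
  (is_minus (u 0%nat), is_minus (v 0%nat),
   lex (Nat.compare (int_digit u k) (int_digit v k))
       (Nat.compare (word_trunc u k) (word_trunc v k))).
Proof.
  replace (2 * k + 2)%nat with (S (2 * k + 1)) by lia.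
  change (cmp_run (S (2 * k + 1))) with
    (cmp_step (cmp_run (2 * k + 1))
       (position_phase (2 * k + 1), (u (2 * k + 1), v (2 * k + 1))))%nat.
  rewrite cmp_run_odd, position_phase_int. reflexivity.
Qed.

Lemma cmp_run_eventually x y : digit_rep beta x u -> digit_rep beta y v ->
  exists M, forall i, (M <= i)%nat -> cmp_verdict (cmp_run i) = Rcompare x y.
Proof.
  intros Hx Hy. destruct (word_trunc_compare beta Hbeta x y u v Hx Hy) as [M HM].
  destruct Hx as [_ [Hsx [[Nx [_ [HNx _]]] _]]]. destruct Hy as [_ [Hsy [[Ny [_ [HNy _]]] _]]].
  assert (Hsign : Rcompare x y =
            signed_compare (is_minus (u 0%nat)) (is_minus (v 0%nat)) (Rcompare (Rabs x) (Rabs y))).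
  { apply Rcompare_signed; [destruct Hsx as [[H E]|[H E]] | destruct Hsy as [[H E]|[H E]]];
      rewrite E; auto. }
  exists (2 * max M (max Nx Ny) + 1)%nat. intros i Hi. rewrite Hsign.
  destruct (position_cases i) as [->|[[k ->]|[k ->]]]; [lia | |].
  - rewrite cmp_run_odd, <- (HM k) by lia. reflexivity.
  - rewrite cmp_run_even, HNx, HNy, <- (HM k) by lia. reflexivity.
Qed.

End Run.

Lemma accepts_cmp_buchi r x y u v : digit_rep beta x u -> digit_rep beta y v ->
  accepts (cmp_buchi r) (zipw u v) <-> relR r x y.
Proof.
  intros Hx Hy. unfold cmp_buchi. rewrite accepts_zip_iter, accepts_det, <- rel_holds_Rcompare.
  apply inf_often_eventually_const. exact (cmp_run_eventually u v x y Hx Hy).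
Qed.

End Comparison.

Lemma real_comparator_buchi (beta : nat) (Hbeta : (2 <= beta)%nat) (r : Rel) :
  exists K : Buchi (AlphaRep beta * AlphaRep beta), forall u v,
    accepts K (zipw u v) <-> exists x y, IsRep beta x u /\ IsRep beta y v /\ relR r x y.
Proof.
  exists (buchi_inter (buchi_map fst (valid_buchi beta))
            (buchi_inter (buchi_map snd (valid_buchi beta)) (cmp_buchi beta r))).
  intros u v. rewrite !accepts_inter, !accepts_map.
  change (fun i => fst (zipw u v i)) with u. change (fun i => snd (zipw u v i)) with v.
  rewrite !accepts_valid_buchi by exact Hbeta. split.
  - intros [[x Hx] [[y Hy] Hc]]. exists x, y. split; [exact Hx | split; [exact Hy|]].
    apply (IsRep_iff_digit_rep beta Hbeta) in Hx, Hy.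
    exact (proj1 (accepts_cmp_buchi beta Hbeta r x y u v Hx Hy) Hc).
  - intros [x [y [Hx [Hy Hr]]]]. split; [exists x; exact Hx | split; [exists y; exact Hy|]].
    apply (IsRep_iff_digit_rep beta Hbeta) in Hx, Hy.
    exact (proj2 (accepts_cmp_buchi beta Hbeta r x y u v Hx Hy) Hr).
Qed.

Lemma zipw_fst_snd {X Y : Type} (t : oword (X * Y)) :
  zipw (fun i => fst (t i)) (fun i => snd (t i)) = t.
Proof. apply functional_extensionality. intros i. unfold zipw. destruct (t i). reflexivity. Qed.

Theorem theorem3 (mu beta : nat) (Hmu : (0 < mu)%nat) (Hbeta : (2 <= beta)%nat)
  (f : oword (Sig mu) -> R) :
  omega_regular_fun beta f ->
  forall r : Rel, omega_regular_comparator f r.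
Proof.
  intros [B HB] r. destruct (real_comparator_buchi beta Hbeta r) as [K HK].
  set (first := fun l : (Sig mu * Sig mu) * (AlphaRep beta * AlphaRep beta) =>
                  (fst (fst l), fst (snd l))).
  set (second := fun l : (Sig mu * Sig mu) * (AlphaRep beta * AlphaRep beta) =>
                   (snd (fst l), snd (snd l))).
  exists (buchi_proj (buchi_inter (buchi_map first B)
                                 (buchi_inter (buchi_map second B) (buchi_map snd K)))).
  intros A C. rewrite accepts_proj. split.
  - intros [t Ht]. rewrite !accepts_inter, !accepts_map in Ht. destruct Ht as [HA [HC Ht]].
    change (accepts K t) in Ht. rewrite <- zipw_fst_snd, HK in Ht.
    destruct Ht as [x [y [Hx [Hy Hr]]]].
    rewrite (proj1 (HB A x _ Hx) HA), (proj1 (HB C y _ Hy) HC). exact Hr.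
  - intros Hr. destruct (IsRep_exists beta Hbeta (f A)) as [u Hu].
    destruct (IsRep_exists beta Hbeta (f C)) as [v Hv].
    exists (zipw u v). rewrite !accepts_inter, !accepts_map. split; [|split].
    + exact (proj2 (HB A (f A) u Hu) eq_refl).
    + exact (proj2 (HB C (f C) v Hv) eq_refl).
    + change (accepts K (zipw u v)). apply HK. exists (f A), (f C). auto.
Qed.
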